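(* For any matrix $A\in\mathbb{R}^{m\times n}$ and $p\in\mathbb{Q}\cap(2,\infty)$, the dual problem of the maximization problem defining $\|A\|_{p_v}$ (given in the context) is $$ \begin{array}{lll} \|A\|_{p_v}= &\min & u_1+ u_2+\theta_p\sum_{i=1}^{m+n} t_i \\ &\textnormal{s.t.} & {v_i}^{p/(p-2)}\le t_i {u_1}^{2/(p-2)}\quad i=1,2,\dots, m \\ && {v_i}^{p/(p-2)}\le t_i {u_2}^{2/(p-2)}\quad i=m+1,m+2,\dots, m+n\\ && u_1\ge0, \,u_2\ge 0, \, \boldsymbol{t}\ge {\bf 0},\, D(\boldsymbol{v})\succeq \begin{pmatrix} O & A/2 \\ A^{\textnormal{T}}/2 & O \end{pmatrix}, \end{array} $$ where $\theta_p:=(2/p)^{2/(p-2)}-(2/p)^{p/(p-2)}>0$ when $p\in(2,\infty)$, and strong duality holds so the optimal value equals $\|A\|_{p_v}$.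
   Context: For $A\in\mathbb{R}^{m\times n}$ and $p\in\mathbb{Q}\cap(2,\infty)$, $$ \|A\|_{p_v}:= \max \left\{\left\langle \begin{pmatrix} O & A/2 \\ A^{\textnormal{T}}/2 & O \end{pmatrix}, X\right\rangle: \sum_{i=1}^m|x_{i i}|^{p/2} \le 1,\ \sum_{i=m+1}^{m+n}|x_{ii}|^{p/2} \le 1,\ X \succeq O\right\}, $$ with $X\in\mathbb{R}^{(m+n)\times(m+n)}$ symmetric. $D(\boldsymbol{v})$ denotes the diagonal matrix with diagonal vector $\boldsymbol{v}\in\mathbb{R}^{m+n}$; $\succeq$ is the positive semidefinite order. *)

From HB Require Import structures.
From mathcomp Require Import all_boot all_order all_algebra.
From mathcomp Require Import boolp classical_sets reals exp.
Set Implicit Arguments. Unset Strict Implicit. Unset Printing Implicit Defensive.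
Import Order.TTheory GRing.Theory Num.Theory.
Local Open Scope ring_scope.
Local Open Scope classical_set_scope.

Section Defs.
Variable R : realType.

Definition psd (k : nat) (X : 'M[R]_k) : Prop :=
  X^T = X /\ forall x : 'cV[R]_k, 0 <= (x^T *m X *m x) 0 0.

Definition frob (k : nat) (B X : 'M[R]_k) : R := \tr (B^T *m X).

Definition bigA (m n : nat) (A : 'M[R]_(m, n)) : 'M[R]_(m + n) :=
  block_mx 0 (2^-1 *: A) (2^-1 *: A^T) 0.

Definition pv_feasible {m n : nat} (p : rat) (X : 'M[R]_(m + n)) : Prop :=
  psd X /\
  \sum_(i < m + n | (i < m)%N) `|X i i| `^ (ratr p / 2) <= 1 /\
  \sum_(i < m + n | (m <= i)%N) `|X i i| `^ (ratr p / 2) <= 1.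

Definition pv_norm (m n : nat) (A : 'M[R]_(m, n)) (p : rat) : R :=
  sup [set frob (bigA A) X | X in pv_feasible p].

Definition theta_p (p : rat) : R :=
  (2 / ratr p) `^ (2 / (ratr p - 2)) - (2 / ratr p) `^ (ratr p / (ratr p - 2)).

Definition dual_feasible (m n : nat) (A : 'M[R]_(m, n)) (p : rat)
  (u1 u2 : R) (t v : 'rV[R]_(m + n)) : Prop :=
  (forall i : 'I_(m + n), (i < m)%N ->
     v 0 i `^ (ratr p / (ratr p - 2)) <= t 0 i * u1 `^ (2 / (ratr p - 2))) /\
  (forall i : 'I_(m + n), (m <= i)%N ->
     v 0 i `^ (ratr p / (ratr p - 2)) <= t 0 i * u2 `^ (2 / (ratr p - 2))) /\
  0 <= u1 /\ 0 <= u2 /\ (forall i, 0 <= t 0 i) /\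
  psd (diag_mx v - bigA A).

Definition dual_obj (m n : nat) (p : rat) (u1 u2 : R) (t : 'rV[R]_(m + n)) : R :=
  u1 + u2 + theta_p p * \sum_i t 0 i.

End Defs.

(* The primal feasible set (psd matrices whose two diagonal blocks have unit
   l_(p/2)-norm) is compact, so the linear objective <B, X> attains its maximum
   V at some X0.  Weak duality combines <D(v) - B, X> >= 0 for psd matrices with
   Young's inequality v x <= u x^(p/2) + theta_p v^(p/(p-2)) / u^(2/(p-2)), of
   which theta_p is the sharp constant.  For the converse, B only couples the
   two blocks, so rescaling the blocks of a psd Y gives
   <B, Y> <= V/2 (|diag_1 Y|_(p/2) + |diag_2 Y|_(p/2)); comparing X0 with
   X0 + e z z^T and letting e -> 0+ yields D(v) >= B for
   v_i = V/2 X0_ii^(p/2-1).  Taking u1 = u2 = V/p and t tight in the remaining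
   constraints, the dual objective is exactly V. *)

From HB Require Import structures.
From mathcomp Require Import all_boot all_order all_algebra.
From mathcomp Require Import boolp classical_sets reals exp.
From mathcomp Require Import topology normedtype matrix_normedtype derive.
From mathcomp Require Import ring lra.
Import Order.TTheory GRing.Theory Num.Theory.
Import numFieldTopology.Exports numFieldNormedType.Exports.
Set Implicit Arguments. Unset Strict Implicit. Unset Printing Implicit Defensive.
Local Open Scope ring_scope.

Section PsdCone.
Variables (R : realType) (k : nat).
Implicit Types (X P : 'M[R]_k) (w x y z : 'cV[R]_k).

Local Notation ev i := (@delta_mx R k 1 i ord0).

Definition bform X x y : R := (x^T *m X *m y) 0 0.

Lemma bformE X x y : bform X x y = \sum_i \sum_j x i 0 * X i j * y j 0.
Proof.
rewrite /bform mxE exchange_big /=; apply: eq_bigr => j _.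
by rewrite mxE mulr_suml; apply: eq_bigr => i _; rewrite !mxE.
Qed.

Lemma bformDl X x y z : bform X (x + y) z = bform X x z + bform X y z.
Proof. by rewrite /bform linearD /= !mulmxDl mxE. Qed.

Lemma bformDr X x y z : bform X z (x + y) = bform X z x + bform X z y.
Proof. by rewrite /bform !mulmxDr mxE. Qed.

Lemma bformZl X a x y : bform X (a *: x) y = a * bform X x y.
Proof. by rewrite /bform linearZ /= -!scalemxAl mxE. Qed.

Lemma bformZr X a x y : bform X x (a *: y) = a * bform X x y.
Proof. by rewrite /bform -!scalemxAr mxE. Qed.

Lemma bformD X P x y : bform (X + P) x y = bform X x y + bform P x y.
Proof. by rewrite /bform mulmxDr mulmxDl mxE. Qed.

Lemma bformZ a X x y : bform (a *: X) x y = a * bform X x y.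
Proof. by rewrite /bform -scalemxAr -scalemxAl mxE. Qed.

Lemma bformB X P x y : bform (X - P) x y = bform X x y - bform P x y.
Proof. by rewrite -scaleN1r bformD bformZ mulN1r. Qed.

Lemma trmx_mul11C x y : (x^T *m y) 0 0 = (y^T *m x) 0 0.
Proof.
have -> : (x^T *m y) 0 0 = ((x^T *m y)^T) 0 0 by rewrite [RHS]mxE.
by rewrite trmx_mul trmxK.
Qed.

Lemma bformC X x y : X^T = X -> bform X x y = bform X y x.
Proof. by move=> sX; rewrite /bform -mulmxA trmx_mul11C trmx_mul sX. Qed.

Lemma bform_delta X i j : bform X (ev i) (ev j) = X i j.
Proof. by rewrite /bform trmx_delta -mulmxA -colE -rowE !mxE. Qed.

Lemma psd_bform_ge0 X x : psd X -> 0 <= bform X x x.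
Proof. by case=> _; apply. Qed.

Lemma psd_diag_ge0 X i : psd X -> 0 <= X i i.
Proof. by move=> pX; rewrite -bform_delta psd_bform_ge0. Qed.

Lemma bform_shift X z i t : X^T = X ->
  bform X (z + t *: ev i) (z + t *: ev i) =
  bform X z z + 2 * t * bform X (ev i) z + t ^+ 2 * X i i.
Proof.
move=> sX; rewrite !bformDl !bformDr !bformZl !bformZr bform_delta (bformC _ z) //.
by rewrite mulrA -expr2; ring.
Qed.

Lemma psd_line_ge0 X i j t : psd X -> 0 <= X j j + 2 * t * X i j + t ^+ 2 * X i i.
Proof.
move=> pX; have := psd_bform_ge0 (ev j + t *: ev i) pX.
by rewrite bform_shift ?pX.1 // !bform_delta.
Qed.

Lemma psd_offdiag0 X i j : psd X -> X i i = 0 -> X i j = 0.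
Proof.
move=> pX Xii; apply/eqP; apply: contraT => Xij.
have := psd_line_ge0 i j (- (X j j + 1) / (2 * X i j)) pX.
rewrite Xii mulr0 addr0.
have -> : 2 * (- (X j j + 1) / (2 * X i j)) * X i j = - (X j j + 1) by field.
lra.
Qed.

Lemma psd_entry_le X i j : psd X -> 2 * `|X i j| <= X i i + X j j.
Proof.
move=> pX; have := psd_line_ge0 i j 1 pX; have := psd_line_ge0 i j (-1) pX.
rewrite sqrrN expr1n mulr1 mul1r.
by case: (lerP 0 (X i j)) => [/ger0_norm|/ltr0_norm] ->; lra.
Qed.

Lemma psd_diag0_eq0 X : psd X -> (forall i, X i i = 0) -> X = 0.
Proof. by move=> pX X0; apply/matrixP => i j; rewrite mxE psd_offdiag0. Qed.

Lemma psdD X P : psd X -> psd P -> psd (X + P).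
Proof.
move=> [sX pX] [sP pP]; split; first by rewrite linearD /= sX sP.
by move=> x; rewrite -/(bform _ x x) bformD addr_ge0 ?pX ?pP.
Qed.

Lemma psdZ a X : 0 <= a -> psd X -> psd (a *: X).
Proof.
move=> a0 [sX pX]; split; first by rewrite linearZ /= sX.
by move=> x; rewrite -/(bform _ x x) bformZ mulr_ge0 ?pX.
Qed.

Lemma bform_rank1 w x : bform (w *m w^T) x x = (x^T *m w) 0 0 ^+ 2.
Proof. by rewrite /bform !mulmxA -mulmxA mxE big_ord1 (trmx_mul11C w) expr2. Qed.

Lemma psd_rank1 w : psd (w *m w^T).
Proof.
by split => [|x]; [rewrite trmx_mul trmxK | rewrite -/(bform _ x x) bform_rank1 sqr_ge0].
Qed.

Lemma psd_diag_congr X (d : 'I_k -> R) :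
  psd X -> psd (\matrix_(i, j) (d i * d j * X i j)).
Proof.
move=> [sX pX]; split.
  by apply/matrixP => i j; rewrite !mxE -[in RHS]sX mxE; ring.
move=> x; rewrite -/(bform _ x x).
have := pX (\col_i (d i * x i 0)); rewrite -/(bform _ _ _) !bformE.
by congr (0 <= _); apply: eq_bigr => i _; apply: eq_bigr => j _; rewrite !mxE; ring.
Qed.

(* If [X i i = 0] then [(X i i)^-1 = 0] and [schur_peel X i = X]. *)
Definition schur_peel X i : 'M[R]_k := X - (X i i)^-1 *: (col i X *m (col i X)^T).

Lemma schur_peelE X i j l :
  schur_peel X i j l = X j l - (X i i)^-1 * (X j i * X l i).
Proof. by rewrite !mxE big_ord1 !mxE. Qed.

Lemma psd_schur_peel X i : psd X -> psd (schur_peel X i).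
Proof.
move=> pX; have [Xii0|Xii_neq0] := eqVneq (X i i) 0.
  by rewrite /schur_peel Xii0 invr0 scale0r subr0.
have Xii_gt0 : 0 < X i i by rewrite lt_def Xii_neq0 psd_diag_ge0.
have [sX _] := pX; split.
  by rewrite /schur_peel linearB /= linearZ /= trmx_mul trmxK sX.
move=> z; rewrite -/(bform _ z z) /schur_peel bformB bformZ bform_rank1.
rewrite colE mulmxA -/(bform X z (ev i)) bformC //.
set b := bform X (ev i) z.
(* the form along the line [z + t e_i] is minimal at [t = - b / X i i] *)
have := psd_bform_ge0 (z + (- b / X i i) *: ev i) pX.
rewrite bform_shift // -/b -addrA.
suff -> : 2 * (- b / X i i) * b + (- b / X i i) ^+ 2 * X i i = - ((X i i)^-1 * b ^+ 2).
  by [].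
by field.
Qed.

Lemma psd_sum_rank1 X : psd X -> exists ws : seq 'cV[R]_k, X = \sum_(w <- ws) w *m w^T.
Proof.
suff peel (s : seq 'I_k) : forall X : 'M[R]_k, psd X -> (forall j, j \notin s -> X j j = 0) ->
    exists ws : seq 'cV[R]_k, X = \sum_(w <- ws) w *m w^T.
  by move=> pX; apply: (peel (enum 'I_k)) => // j; rewrite mem_enum.
elim: s => [|i s IHs] {}X pX diagX.
  by exists [::]; rewrite big_nil; apply: psd_diag0_eq0 => // j; apply: diagX.
have diagX' j : j \notin s -> schur_peel X i j j = 0.
  move=> js; rewrite schur_peelE; have [->|ji] := eqVneq j i.
    have [->|Xii] := eqVneq (X i i) 0; first by rewrite invr0 mul0r subr0.
    by field.
  have Xjj : X j j = 0 by apply: diagX; rewrite inE negb_or ji.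
  by rewrite Xjj (psd_offdiag0 i pX Xjj) mul0r mulr0 subr0.
have [ws defX'] := IHs _ (psd_schur_peel i pX) diagX'.
exists (Num.sqrt (X i i)^-1 *: col i X :: ws).
rewrite big_cons -defX' /schur_peel linearZ /= -scalemxAl -scalemxAr scalerA.
by rewrite -expr2 sqr_sqrtr ?invr_ge0 ?psd_diag_ge0 // addrC subrK.
Qed.

Lemma frobE P X : frob P X = \sum_i \sum_j P i j * X i j.
Proof.
rewrite /frob /mxtrace exchange_big /=; apply: eq_bigr => i _.
by rewrite mxE; apply: eq_bigr => j _; rewrite mxE.
Qed.

Lemma frobD P X Y : frob P (X + Y) = frob P X + frob P Y.
Proof. by rewrite /frob mulmxDr mxtraceD. Qed.

Lemma frobZ P a X : frob P (a *: X) = a * frob P X.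
Proof. by rewrite /frob -scalemxAr mxtraceZ. Qed.

Lemma frobBl P Q X : frob (P - Q) X = frob P X - frob Q X.
Proof. by rewrite /frob linearB /= mulmxBl linearB. Qed.

Lemma frob_diag_mx (v : 'rV[R]_k) X : frob (diag_mx v) X = \sum_i v 0 i * X i i.
Proof.
rewrite frobE; apply: eq_bigr => i _; rewrite (bigD1 i) //= big1 => [|j ji].
  by rewrite mxE eqxx mulr1n addr0.
by rewrite mxE eq_sym (negbTE ji) mulr0n mul0r.
Qed.

Lemma bform_diag_mx (v : 'rV[R]_k) x : bform (diag_mx v) x x = \sum_i v 0 i * x i 0 ^+ 2.
Proof.
rewrite bformE; apply: eq_bigr => i _; rewrite (bigD1 i) //= big1 => [|j ji].
  by rewrite mxE eqxx mulr1n addr0 expr2; ring.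
by rewrite mxE eq_sym (negbTE ji) mulr0n mulr0 mul0r.
Qed.

Lemma frob_rank1 P w : P^T = P -> frob P (w *m w^T) = bform P w w.
Proof. by move=> sP; rewrite /frob sP mulmxA mxtrace_mulC mulmxA trace_mx11. Qed.

Lemma frob_psd_ge0 P X : psd P -> psd X -> 0 <= frob P X.
Proof.
move=> pP /psd_sum_rank1[ws ->].
rewrite /frob mulmx_sumr raddf_sum /= sumr_ge0 // => w _.
by rewrite -/(frob P _) frob_rank1 ?pP.1 // psd_bform_ge0.
Qed.

End PsdCone.

Section PowerInequalities.
Variable R : realType.
Implicit Types (a b c e q r s u v x : R).

Lemma powR_bernoulli_le s x : 0 < s <= 1 -> 0 <= x -> (1 + x) `^ s <= 1 + s * x.
Proof.
move=> /andP[s0 s1] x0.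
have [->|s_neq1] := eqVneq s 1; first by rewrite powRr1 ?mul1r //; lra.
have s_lt1 : s < 1 by rewrite lt_neqAle s_neq1 s1.
have := @conjugate_powR R ((1 + x) `^ s) 1 s^-1 (1 - s)^-1 (powR_ge0 _ _) ler01.
rewrite invr_gt0 s0 invr_gt0 subr_gt0 s_lt1 !invrK addrC subrK => /(_ isT isT erefl).
by rewrite mulr1 -powRrM mulfV ?gt_eqF // powRr1 ?powR1 //; lra.
Qed.

Lemma powR_tangent_le q a b : 1 < q -> 0 <= a <= b ->
  b `^ q <= a `^ q + q * (b - a) * b `^ (q - 1).
Proof.
move=> q1 /andP[a0 ab].
have q0 : 0 < q by apply: lt_trans q1.
have q10 : 0 < q - 1 by rewrite subr_gt0.
have := @conjugate_powR R a (b `^ (q - 1)) q (q / (q - 1)) a0 (powR_ge0 _ _) q0.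
have conj : q^-1 + (q / (q - 1))^-1 = 1 by field; rewrite !gt_eqF.
rewrite divr_gt0 // conj => /(_ isT erefl).
rewrite -powRrM mulrCA mulfV ?gt_eqF // mulr1 => young.
have bq : b `^ q = b * b `^ (q - 1) by rewrite mulr_powRB1 // (le_trans a0).
have : q * (a * b `^ (q - 1)) <= a `^ q + (q - 1) * b `^ q.
  have -> : a `^ q + (q - 1) * b `^ q = q * (a `^ q / q + b `^ q / (q / (q - 1))).
    by field; rewrite !gt_eqF.
  by rewrite ler_pM2l.
rewrite bq; nra.
Qed.

Lemma powR_sum_perturb_le (I : finType) (P : pred I) q e (a h : I -> R) :
  1 < q -> 0 <= e -> (forall i, 0 <= a i) -> (forall i, 0 <= h i) ->
  \sum_(i | P i) a i `^ q <= 1 ->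
  (\sum_(i | P i) (a i + e * h i) `^ q) `^ q^-1 <=
  1 + e * \sum_(i | P i) h i * (a i + e * h i) `^ (q - 1).
Proof.
move=> q1 e0 a0 h0 sum_le1.
have q0 : 0 < q by apply: lt_trans q1.
set K := \sum_(i | P i) h i * _.
have K0 : 0 <= K by apply: sumr_ge0 => i _; apply: mulr_ge0 => //; apply: powR_ge0.
have sum_le : \sum_(i | P i) (a i + e * h i) `^ q <= 1 + q * e * K.
  apply: (@le_trans _ _ (\sum_(i | P i)
      (a i `^ q + q * e * (h i * (a i + e * h i) `^ (q - 1))))).
    apply: ler_sum => i _.
    have := @powR_tangent_le q (a i) (a i + e * h i) q1.
    rewrite lerDl a0 mulr_ge0 // => /(_ isT).
    by rewrite [_ + e * h i - a i]addrC addKr !mulrA.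
  by rewrite big_split /= -mulr_sumr lerD.
have q_inv : 0 < q^-1 <= 1 by rewrite invr_gt0 q0 invf_le1 // ltW.
have lhs0 : 0 <= \sum_(i | P i) (a i + e * h i) `^ q.
  by apply: sumr_ge0 => i _; apply: powR_ge0.
have rhs0 : 0 <= 1 + q * e * K by rewrite addr_ge0 // !mulr_ge0 // ltW.
apply: le_trans (ge0_ler_powR (ltW (proj1 (andP q_inv))) lhs0 rhs0 sum_le) _.
rewrite -mulrA; apply: le_trans (powR_bernoulli_le q_inv _) _.
  by rewrite !mulr_ge0 // ltW.
by rewrite mulrA mulVf ?gt_eqF // mul1r.
Qed.

(* [theta r] is the sharp constant in Young's inequality for the conjugate
   exponents [r/2] and [r/(r-2)] (lemma [young_theta]). *)
Definition theta r : R :=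
  (2 / r) `^ (2 / (r - 2)) - (2 / r) `^ (r / (r - 2)).

Lemma thetaE r : 2 < r -> theta r = (2 / r) `^ (2 / (r - 2)) * (1 - 2 / r).
Proof.
move=> r2; have r0 : 0 < r by apply: lt_trans r2.
have r20 : 0 < r - 2 by rewrite subr_gt0.
rewrite /theta; have -> : r / (r - 2) = 2 / (r - 2) + 1 by field; rewrite gt_eqF.
rewrite powRD ?powRr1 ?divr_ge0 ?ltW //; first ring.
by rewrite implybE mulf_neq0 ?orbT // ?invr_eq0 gt_eqF.
Qed.

Lemma theta_gt0 r : 2 < r -> 0 < theta r.
Proof.
move=> r2; have r0 : 0 < r by apply: lt_trans r2.
rewrite thetaE // mulr_gt0 ?powR_gt0 ?divr_gt0 //.
by rewrite subr_gt0 ltr_pdivrMr // mul1r.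
Qed.

Lemma young_theta r u v x : 2 < r -> 0 < u -> 0 <= v -> 0 <= x ->
  v * x <= u * x `^ (r / 2) + theta r * (v `^ (r / (r - 2)) / u `^ (2 / (r - 2))).
Proof.
move=> r2 u0 v0 x0; have r0 : 0 < r by apply: lt_trans r2.
have r20 : 0 < r - 2 by rewrite subr_gt0.
set q := r / 2; set qs := r / (r - 2); set e := 2 / (r - 2).
have q0 : 0 < q by rewrite divr_gt0.
have qs0 : 0 < qs by rewrite divr_gt0.
pose c := (q * u) `^ q^-1.
have c0 : 0 < c by rewrite powR_gt0 // mulr_gt0.
have cq : c `^ q = q * u.
  by rewrite -powRrM mulVf ?gt_eqF // powRr1 // mulr_ge0 // ltW.
have cqs : c `^ qs = q `^ e * u `^ e.
  rewrite -powRrM -powRM ?ltW //; congr (_ `^ _).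
  by rewrite /q /qs /e; field; rewrite !gt_eqF.
have cinv : c^-1 `^ qs = (c `^ qs)^-1.
  by rewrite -powR_inv1 ?(ltW c0) // -powRrM mulN1r powRN.
have theta_qe : theta r = (q `^ e)^-1 / qs.
  rewrite thetaE // -invf_div -/q -/e; congr (_ * _).
    by rewrite -(powR_inv1 (ltW q0)) -powRrM mulN1r powRN.
  by rewrite /q /qs; field; rewrite !gt_eqF.
have conj : q^-1 + qs^-1 = 1 by rewrite /q /qs; field; rewrite !gt_eqF.
have := conjugate_powR (mulr_ge0 x0 (ltW c0)) (divr_ge0 v0 (ltW c0)) q0 qs0 conj.
rewrite !powRM ?invr_ge0 ?(ltW c0) // cq cinv cqs theta_qe.
have qe0 : 0 < q `^ e by apply: powR_gt0.
have ue0 : 0 < u `^ e by apply: powR_gt0.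
have -> : x * c * (v / c) = v * x by field; rewrite gt_eqF.
move=> /le_trans; apply; rewrite le_eqVlt; apply/orP; left; apply/eqP.
by field; rewrite !gt_eqF.
Qed.

Lemma theta_scale r s : 2 < r -> 0 < s ->
  theta r * ((s / 2) `^ (r / (r - 2)) / (s / r) `^ (2 / (r - 2))) = (1 - 2 / r) * (s / 2).
Proof.
move=> r2 s0; have r0 : 0 < r by apply: lt_trans r2.
have r20 : 0 < r - 2 by rewrite subr_gt0.
have s2 : 0 < s / 2 by rewrite divr_gt0.
have -> : r / (r - 2) = 2 / (r - 2) + 1 by field; rewrite gt_eqF.
have -> : s / r = s / 2 * (2 / r) by field; rewrite gt_eqF.
have e_ne0 : (2 / (r - 2) + 1 == 0) ==> (s / 2 != 0) by rewrite implybE (gt_eqF s2) orbT.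
have h2r : 0 <= 2 / r by rewrite divr_ge0 // ltW.
rewrite thetaE // (powRD e_ne0) (powRr1 (ltW s2)) (powRM _ (ltW s2) h2r).
have := @powR_gt0 _ (s / 2) (2 / (r - 2)) s2.
have := @powR_gt0 _ (2 / r) (2 / (r - 2)) (divr_gt0 (ltr0Sn _ 1) r0).
by move=> *; field; rewrite !gt_eqF.
Qed.

Lemma young_theta_le r u v x t : 2 < r -> 0 <= u -> 0 <= v -> 0 <= x -> 0 <= t ->
  v `^ (r / (r - 2)) <= t * u `^ (2 / (r - 2)) ->
  v * x <= u * x `^ (r / 2) + theta r * t.
Proof.
move=> r2 u0 v0 x0 t0 vt; have r20 : 0 < r - 2 by rewrite subr_gt0.
have th0 := theta_gt0 r2.
have [u_eq0|u_neq0] := eqVneq u 0.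
  move: vt; rewrite u_eq0 powR0 ?mulr0 ?gt_eqF ?divr_gt0 // => vt.
  have /powR_eq0_eq0 -> : v `^ (r / (r - 2)) = 0.
    by apply/eqP; rewrite eq_le vt powR_ge0.
  by rewrite mul0r mul0r add0r mulr_ge0 // ltW.
have u_gt0 : 0 < u by rewrite lt_def u_neq0.
apply: (le_trans (young_theta r2 u_gt0 v0 x0)); rewrite lerD2l ler_pM2l //.
by rewrite ler_pdivrMr // powR_gt0.
Qed.

Lemma sum_young_theta_le (I : finType) (P : pred I) r u (x v t : I -> R) :
  2 < r -> 0 <= u -> (forall i, 0 <= x i) -> (forall i, 0 <= v i) ->
  (forall i, 0 <= t i) -> (forall i, P i -> v i `^ (r / (r - 2)) <= t i * u `^ (2 / (r - 2))) ->
  \sum_(i | P i) x i `^ (r / 2) <= 1 ->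
  \sum_(i | P i) v i * x i <= u + theta r * \sum_(i | P i) t i.
Proof.
move=> r2 u0 x0 v0 t0 vt sum_le1.
apply: le_trans (ler_sum _ (fun i Pi =>
  young_theta_le r2 u0 (v0 i) (x0 i) (t0 i) (vt i Pi))) _.
rewrite big_split /= -!mulr_sumr lerD2r -[leRHS]mulr1.
by rewrite ler_wpM2l.
Qed.

End PowerInequalities.

Local Open Scope classical_set_scope.

Section Continuity.
Variable R : realType.

Lemma continuous_sumr {T : topologicalType} (I : finType) (P : pred I)
    (F : I -> T -> R) :
  (forall i, continuous (F i)) -> continuous (fun t => \sum_(i | P i) F i t).
Proof. by move=> Fc; apply: continuous_big => [|i _]; [exact: add_continuous|]. Qed.

Lemma continuous_normr_powR c : 0 < c -> continuous (fun x : R => `|x| `^ c).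
Proof.
move=> c0 x; have [->|x0] := eqVneq x 0.
  apply/cvgrPdist_lt => e e0 /=; rewrite normr0 powR0 ?gt_eqF //.
  apply/nbhs_ballP; exists (e `^ c^-1); first exact: powR_gt0.
  move=> y; rewrite /ball /= sub0r normrN => y_lt.
  rewrite sub0r normrN ger0_norm ?powR_ge0 //.
  have -> : e = (e `^ c^-1) `^ c by rewrite -powRrM mulVf ?gt_eqF // powRr1 // ltW.
  by apply: gt0_ltr_powR; rewrite ?nnegrE ?powR_ge0.
apply: (@continuous_comp _ _ _ (fun x : R => `|x|) (fun y => y `^ c)).
  exact: norm_continuous.
apply: differentiable_continuous; rewrite -derivable1_diffP.
by apply: derivable_powR; rewrite in_itv /= andbT normr_gt0.
Qed.

Lemma continuous_affine_normr_powR a b c : 0 < c ->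
  continuous (fun e : R => `|a + e * b| `^ c).
Proof.
move=> c0 x; apply: (@continuous_comp _ _ _ (fun e : R => a + e * b)
  (fun y : R => `|y| `^ c)); last exact: continuous_normr_powR.
apply: (@continuousD _ _ _ (fun=> a) (fun e : R => e * b)); first exact: cst_continuous.
exact: mulrr_continuous.
Qed.

End Continuity.

(* Heine-Borel ([bounded_closed_compact]) is stated for row vectors, so sets of
   matrices are handled through the isomorphism [vec_mx]. *)
Section PsdClosed.
Variables (R : realType) (k : nat).

Lemma continuous_vec_mx_entry i j :
  continuous (fun r : 'rV[R]_(k * k) => vec_mx r i j).
Proof.
have -> : (fun r : 'rV[R]_(k * k) => vec_mx r i j) = fun r => r 0 (mxvec_index i j).
  by apply/funext => r; rewrite mxE.
exact: coord_continuous.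
Qed.

Lemma continuous_vec_mx_comb (c : 'I_k -> 'I_k -> R) :
  continuous (fun r : 'rV[R]_(k * k) => \sum_i \sum_j c i j * vec_mx r i j).
Proof.
apply: continuous_sumr => i; apply: continuous_sumr => j r /=.
by apply: continuousM; [exact: cst_continuous | exact: continuous_vec_mx_entry].
Qed.

Lemma closed_psd_vec : closed [set r : 'rV[R]_(k * k) | psd (vec_mx r)].
Proof.
have -> : [set r : 'rV[R]_(k * k) | psd (vec_mx r)] =
    \bigcap_(ij in [set: 'I_k * 'I_k])
      [set r | vec_mx r ij.1 ij.2 - vec_mx r ij.2 ij.1 = 0] `&`
    \bigcap_(x in [set: 'cV[R]_k]) [set r | 0 <= \sum_i \sum_j (x i 0 * x j 0) * vec_mx r i j].
  apply/seteqP; split => r /=.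
    move=> [sX pX]; split => [ij _|x _] /=.
      by move/matrixP: sX => /(_ ij.2 ij.1); rewrite [LHS]mxE => ->; rewrite subrr.
    by have := pX x; rewrite -/(bform _ x x) bformE; congr (0 <= _);
      apply: eq_bigr => i _; apply: eq_bigr => j _; ring.
  move=> [symX posX]; split.
    by apply/matrixP => i j; apply/eqP; rewrite mxE -subr_eq0 (symX (j, i)).
  move=> x; rewrite -/(bform _ x x) bformE; have := posX x I; congr (0 <= _).
  by apply: eq_bigr => i _; apply: eq_bigr => j _; ring.
apply: closedI.
- apply: closed_bigI => ij _.
  apply: (@preimage_closed _ _
    (fun r => vec_mx r ij.1 ij.2 - vec_mx r ij.2 ij.1) [set x | x = 0]).
    by move=> r _; apply: continuousB; apply: continuous_vec_mx_entry.
  exact: closed_eq.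
- apply: closed_bigI => x _.
  apply: (@preimage_closed _ _
    (fun r => \sum_i \sum_j (x i 0 * x j 0) * vec_mx r i j) [set y | 0 <= y]).
    by move=> r _; apply: continuous_vec_mx_comb.
  exact: closed_ge.
Qed.

End PsdClosed.

Section PrimalAttainment.
Variables (R : realType) (m n : nat) (A : 'M[R]_(m, n)) (p : rat).
Hypothesis p2 : 2 < ratr p :> R.
Local Notation r := (ratr p : R).

Let r2_gt0 : 0 < r / 2.
Proof. by rewrite divr_gt0 // (lt_trans _ p2). Qed.

Lemma pv_feasible0 : @pv_feasible R m n p 0.
Proof.
split; first by split=> [|x]; rewrite ?trmx0 // mulmx0 mul0mx mxE.
by split; rewrite big1 // => i _; rewrite mxE normr0 powR0 ?gt_eqF.
Qed.

Lemma pv_feasible_diag_le1 (X : 'M[R]_(m + n)) i : pv_feasible p X -> X i i <= 1.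
Proof.
move=> [pX [sumI sumJ]]; have Xii0 := psd_diag_ge0 i pX.
have : `|X i i| `^ (r / 2) <= 1.
  have le_sum (P : pred 'I_(m + n)) : P i ->
      `|X i i| `^ (r / 2) <= \sum_(j | P j) `|X j j| `^ (r / 2).
    by move=> Pi; rewrite (bigD1 i) //= lerDl sumr_ge0 // => *; apply: powR_ge0.
  case: (ltnP i m) => [im|mi].
    exact: le_trans (le_sum (fun j : 'I_(m + n) => (j < m)%N) im) sumI.
  exact: le_trans (le_sum (fun j : 'I_(m + n) => (m <= j)%N) mi) sumJ.
rewrite ger0_norm //; apply: contraTT; rewrite -!ltNge => Xii_gt1.
have := @gt0_ltr_powR R (r / 2) r2_gt0 1 (X i i).
by rewrite !nnegrE ler01 Xii0 powR1; apply.
Qed.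

Lemma pv_feasible_entry_le1 (X : 'M[R]_(m + n)) i j : pv_feasible p X -> `|X i j| <= 1.
Proof.
move=> FX; have := psd_entry_le i j FX.1.
have := pv_feasible_diag_le1 i FX; have := pv_feasible_diag_le1 j FX; lra.
Qed.

Lemma compact_pv_feasible_vec :
  compact [set x : 'rV[R]_((m + n) * (m + n)) | pv_feasible p (vec_mx x)].
Proof.
apply: bounded_closed_compact.
  rewrite /bounded_set /bounded_near; near=> M => x /= Fx.
  apply: (@le_trans _ _ 1); last by near: M; apply: nbhs_pinfty_ge.
  rewrite (_ : `|x| = mx_norm x) // mx_normrE; apply: bigmax_le => // -[i0 l] _ /=.
  rewrite ord1; case/mxvec_indexP: l => i j.
  by rewrite (_ : x 0 _ = vec_mx x i j) ?pv_feasible_entry_le1 // mxE.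
have closed_diag_sum (P : pred 'I_(m + n)) : closed [set x : 'rV[R]_((m + n) * (m + n)) |
    \sum_(i | P i) `|vec_mx x i i| `^ (r / 2) <= 1].
  apply: (@preimage_closed _ _
    (fun x => \sum_(i | P i) `|vec_mx x i i| `^ (r / 2)) [set y | y <= 1]).
    2: exact: closed_le.
  move=> x _; apply: continuous_sumr => i {}x.
  apply: (@continuous_comp _ _ _ (fun x => vec_mx x i i) (fun y => `|y| `^ (r / 2))).
    exact: continuous_vec_mx_entry.
  exact: continuous_normr_powR.
by apply: closedI; [exact: closed_psd_vec | apply: closedI; apply: closed_diag_sum].
Unshelve. all: by end_near.
Qed.

Lemma pv_max_exists : exists2 X : 'M[R]_(m + n), pv_feasible p X &
  forall Y : 'M[R]_(m + n), pv_feasible p Y -> frob (bigA A) Y <= frob (bigA A) X.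
Proof.
pose F := [set x : 'rV[R]_((m + n) * (m + n)) | pv_feasible p (vec_mx x)].
have F0 : F !=set0 by exists 0; rewrite /F /= linear0; exact: pv_feasible0.
have frob_cont : continuous (fun x => frob (bigA A) (vec_mx x)).
  by under eq_fun do rewrite frobE; exact: continuous_vec_mx_comb.
have [c Fc c_max] :=
  compact_EVT_max F0 compact_pv_feasible_vec (continuous_subspaceT frob_cont).
exists (vec_mx c); first by rewrite inE in Fc.
by move=> Y FY; rewrite -(mxvecK Y); apply: c_max; rewrite inE /F /= mxvecK.
Qed.

Lemma pv_normE (X : 'M[R]_(m + n)) : pv_feasible p X ->
  (forall Y, pv_feasible p Y -> frob (bigA A) Y <= frob (bigA A) X) ->
  pv_norm A p = frob (bigA A) X.
Proof.
move=> FX X_max; have ub : ubound [set frob (bigA A) Y | Y in pv_feasible p] (frob (bigA A) X).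
  by move=> _ [Y FY <-]; apply: X_max.
apply/eqP; rewrite eq_le ge_sup //=; last by exists (frob (bigA A) X), X.
by rewrite ub_le_sup //; [exists (frob (bigA A) X) | exists X].
Qed.

End PrimalAttainment.

Section BlockMatrix.
Variables (R : realType) (m n : nat) (A : 'M[R]_(m, n)).
Local Notation B := (bigA A).

Lemma bigA_sym : B^T = B.
Proof. by rewrite /bigA tr_block_mx !trmx0 !linearZ /= trmxK. Qed.

Lemma bigA_block0 (i j : 'I_(m + n)) : (i < m)%N = (j < m)%N -> B i j = 0.
Proof.
rewrite /bigA -(splitK i) -(splitK j).
case: (split i) => i'; case: (split j) => j' /=; rewrite ?ltn_ord ?ltnNge ?leq_addr //.
- by rewrite block_mxEul mxE.
- by rewrite block_mxEdr mxE.
Qed.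

Lemma sum_split_blocks (F : 'I_(m + n) -> R) :
  \sum_i F i = \sum_(i < m + n | (i < m)%N) F i + \sum_(i < m + n | (m <= i)%N) F i.
Proof.
rewrite (bigID (fun i : 'I_(m + n) => (i < m)%N)) /=; congr (_ + _).
by apply: eq_bigl => i; rewrite -leqNgt.
Qed.

Definition blockwise (a b : R) (i : 'I_(m + n)) : R := if (i < m)%N then a else b.

Lemma frob_bigA_blockwise a b (Y : 'M[R]_(m + n)) :
  frob B (\matrix_(i, j) (blockwise a b i * blockwise a b j * Y i j)) = a * b * frob B Y.
Proof.
rewrite !frobE mulr_sumr; apply: eq_bigr => i _; rewrite mulr_sumr.
apply: eq_bigr => j _; rewrite [X in B i j * X]mxE.
have [/bigA_block0 ->|ij] := eqVneq (i < m)%N (j < m)%N; first by rewrite !mul0r mulr0.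
have -> : blockwise a b i * blockwise a b j = a * b.
  by rewrite /blockwise; move: ij; case: (i < m)%N; case: (j < m)%N => //= _; rewrite mulrC.
by rewrite mulrCA.
Qed.

End BlockMatrix.

Section WeakDuality.
Variables (R : realType) (m n : nat) (A : 'M[R]_(m, n)) (p : rat).
Hypothesis p2 : 2 < ratr p :> R.
Local Notation r := (ratr p : R).
Local Notation B := (bigA A).

Lemma theta_pE : theta_p R p = theta r.
Proof. by []. Qed.

Lemma dual_feasible_ge0 u1 u2 (t v : 'rV[R]_(m + n)) i :
  dual_feasible A p u1 u2 t v -> 0 <= v 0 i.
Proof.
move=> [_ [_ [_ [_ [_ pD]]]]]; have := psd_diag_ge0 i pD.
by rewrite mxE [(- bigA A) i i]mxE bigA_block0 // subr0 mxE eqxx mulr1n.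
Qed.

Lemma weak_duality u1 u2 (t v : 'rV[R]_(m + n)) (X : 'M[R]_(m + n)) :
  dual_feasible A p u1 u2 t v -> pv_feasible p X -> frob B X <= dual_obj p u1 u2 t.
Proof.
move=> Dv [pX [sumI sumJ]]; have [vtI [vtJ [u10 [u20 [t0 pD]]]]] := Dv.
have v0 i := dual_feasible_ge0 i Dv.
have X0 i := psd_diag_ge0 i pX.
have : frob B X <= \sum_i v 0 i * X i i.
  by have := frob_psd_ge0 pD pX; rewrite frobBl frob_diag_mx subr_ge0.
move/le_trans; apply; rewrite /dual_obj theta_pE !sum_split_blocks mulrDr.
rewrite addrACA lerD //.
  apply: (sum_young_theta_le p2 u10 X0 v0 t0 vtI).
  by under eq_bigr do rewrite -[X _ _]ger0_norm //.
apply: (sum_young_theta_le p2 u20 X0 v0 t0 vtJ).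
by under eq_bigr do rewrite -[X _ _]ger0_norm //.
Qed.

End WeakDuality.

Section DiagNorm.
Variables (R : realType) (k : nat).

Definition diag_norm (q : R) (P : pred 'I_k) (Y : 'M[R]_k) : R :=
  (\sum_(i | P i) `|Y i i| `^ q) `^ q^-1.

Lemma diag_norm_ge0 q P Y : 0 <= diag_norm q P Y.
Proof. exact: powR_ge0. Qed.

Lemma sum_diag_inv_scale_le1 q P Y c : 0 < q -> 0 < c -> diag_norm q P Y <= c ->
  \sum_(i | P i) `|c^-1 * Y i i| `^ q <= 1.
Proof.
move=> q0 c0 Nc; pose S := \sum_(i | P i) `|Y i i| `^ q.
have S0 : 0 <= S by apply: sumr_ge0 => i _; apply: powR_ge0.
have -> : \sum_(i | P i) `|c^-1 * Y i i| `^ q = c^-1 `^ q * S.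
  rewrite mulr_sumr; apply: eq_bigr => i _.
  by rewrite normrM powRM // ger0_norm // invr_ge0 ltW.
have SE : S = diag_norm q P Y `^ q by rewrite -powRrM mulVf ?gt_eqF // powRr1.
have cq : c^-1 `^ q * c `^ q = 1 by rewrite -powRM ?invr_ge0 ?ltW // mulVf ?gt_eqF // powR1.
rewrite -cq SE ler_wpM2l ?powR_ge0 //.
by have := ge0_ler_powR (ltW q0) (diag_norm_ge0 q P Y); apply; rewrite ?nnegrE ?(ltW c0).
Qed.

End DiagNorm.

Section StrongDuality.
Variables (R : realType) (m n : nat) (A : 'M[R]_(m, n)) (p : rat).
Hypothesis p2 : 2 < ratr p :> R.
Variable X0 : 'M[R]_(m + n).
Hypothesis X0_feasible : pv_feasible p X0.
Hypothesis X0_max : forall Y, pv_feasible p Y -> frob (bigA A) Y <= frob (bigA A) X0.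
Local Notation r := (ratr p : R).
Local Notation q := (r / 2).
Local Notation B := (bigA A).
Local Notation V := (frob B X0).
Local Notation blockI := (fun i : 'I_(m + n) => (i < m)%N).
Local Notation blockJ := (fun i : 'I_(m + n) => (m <= i)%N).

Let r_gt0 : 0 < r. Proof. exact: lt_trans p2. Qed.
Let q_gt0 : 0 < q. Proof. by rewrite divr_gt0. Qed.
Let q_gt1 : 1 < q. Proof. by rewrite ltr_pdivlMr // mul1r. Qed.

Let X0_diag_ge0 i : 0 <= X0 i i.
Proof. exact: psd_diag_ge0 i X0_feasible.1. Qed.

Let X0_diag_sumE (P : pred 'I_(m + n)) :
  \sum_(i | P i) `|X0 i i| `^ q = \sum_(i | P i) X0 i i `^ q.
Proof. by apply: eq_bigr => i _; rewrite ger0_norm. Qed.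

Lemma value_ge0 : 0 <= V.
Proof. by have := X0_max (pv_feasible0 m n p2); rewrite /frob mulmx0 mxtrace0. Qed.

(* Rescale the two diagonal blocks of [Y] to norm at most one and compare with
   [X0]; the slack [d] avoids dividing by a vanishing block norm. *)
Lemma frob_le_diag_norm Y : psd Y ->
  frob B Y <= V / 2 * (diag_norm q blockI Y + diag_norm q blockJ Y).
Proof.
move=> pY; apply/ler_addgt0Pr => e e0.
set NI := diag_norm q _ Y; set NJ := diag_norm q _ Y.
have V0 := value_ge0.
pose d := e / (V + 1).
have d0 : 0 < d by rewrite divr_gt0 // ltr_wpDl.
have Vd : V * d <= e by rewrite mulrA ler_pdivrMr ?ltr_wpDl //; nra.
have NI0 : 0 < NI + d by rewrite ltr_wpDl ?diag_norm_ge0.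
have NJ0 : 0 < NJ + d by rewrite ltr_wpDl ?diag_norm_ge0.
set sI := Num.sqrt (NI + d); set sJ := Num.sqrt (NJ + d).
have sI0 : 0 < sI by rewrite sqrtr_gt0.
have sJ0 : 0 < sJ by rewrite sqrtr_gt0.
have sI2 : sI ^+ 2 = NI + d by rewrite sqr_sqrtr // ltW.
have sJ2 : sJ ^+ 2 = NJ + d by rewrite sqr_sqrtr // ltW.
pose Y' := \matrix_(i, j) (blockwise sI^-1 sJ^-1 i * blockwise sI^-1 sJ^-1 j * Y i j).
have Y'E i : Y' i i = (blockwise (NI + d) (NJ + d) i)^-1 * Y i i.
  by rewrite mxE /blockwise; case: (i < m)%N; rewrite -invfM -expr2 ?sI2 ?sJ2.
have FY' : pv_feasible p Y'.
  split; first exact: psd_diag_congr.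
  split.
    rewrite (eq_bigr (fun i => `|(NI + d)^-1 * Y i i| `^ q)) => [|i im].
      by apply: sum_diag_inv_scale_le1 => //; rewrite lerDl ltW.
    by rewrite Y'E /blockwise im.
  rewrite (eq_bigr (fun i => `|(NJ + d)^-1 * Y i i| `^ q)) => [|i mi].
    by apply: sum_diag_inv_scale_le1 => //; rewrite lerDl ltW.
  by rewrite Y'E /blockwise ltnNge mi.
have := X0_max FY'; rewrite frob_bigA_blockwise => scaled_le.
have : frob B Y <= sI * sJ * V.
  rewrite (_ : frob B Y = sI * sJ * (sI^-1 * sJ^-1 * frob B Y)).
    by rewrite ler_wpM2l // mulr_ge0 // ltW.
  by field; rewrite !gt_eqF.
have := mulr_ge0 V0 (sqr_ge0 (sI - sJ)).
nra.
Qed.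

Lemma bform_le_perturbed z e : 0 < e ->
  bform B z z <= V / 2 * \sum_i z i 0 ^+ 2 * (X0 i i + e * z i 0 ^+ 2) `^ (q - 1).
Proof.
move=> e0; have V0 := value_ge0.
have [pX0 [sumI sumJ]] := X0_feasible; rewrite !X0_diag_sumE in sumI sumJ.
pose Y := X0 + e *: (z *m z^T).
have pY : psd Y by apply: psdD => //; apply: psdZ; [exact: ltW | exact: psd_rank1].
have YE i : `|Y i i| = X0 i i + e * z i 0 ^+ 2.
  by rewrite !mxE big_ord1 !mxE -expr2 ger0_norm // addr_ge0 // mulr_ge0 ?sqr_ge0 ?ltW.
have frobY : frob B Y = V + e * bform B z z by rewrite frobD frobZ frob_rank1 ?bigA_sym.
have normY (P : pred 'I_(m + n)) : \sum_(i | P i) X0 i i `^ q <= 1 ->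
    diag_norm q P Y <= 1 + e * \sum_(i | P i) z i 0 ^+ 2 * (X0 i i + e * z i 0 ^+ 2) `^ (q - 1).
  move=> sum_le1; rewrite /diag_norm; under eq_bigr do rewrite YE.
  by apply: powR_sum_perturb_le => // [|i]; [exact: ltW | exact: sqr_ge0].
have /= NI_le := normY _ sumI; have /= NJ_le := normY _ sumJ.
have := le_trans (frob_le_diag_norm pY) (ler_wpM2l (divr_ge0 V0 (ler0n _ 2)) (lerD NI_le NJ_le)).
rewrite frobY sum_split_blocks => frob_le; rewrite -(ler_pM2l e0); lra.
Qed.

Lemma first_order_condition z :
  bform B z z <= \sum_i V / 2 * X0 i i `^ (q - 1) * z i 0 ^+ 2.
Proof.
pose H e := V / 2 * \sum_i z i 0 ^+ 2 * `|X0 i i + e * z i 0 ^+ 2| `^ (q - 1).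
have -> : \sum_i V / 2 * X0 i i `^ (q - 1) * z i 0 ^+ 2 = H 0.
  rewrite /H mulr_sumr; apply: eq_bigr => i _.
  by rewrite mul0r addr0 ger0_norm //; ring.
have H_cont : continuous H.
  have q1_gt0 : 0 < q - 1 by rewrite subr_gt0.
  move=> x; apply: (@continuousM _ _ (fun=> V / 2)); first exact: cst_continuous.
  apply: continuous_sumr => i {}x.
  apply: (@continuousM _ _ (fun=> z i 0 ^+ 2)
    (fun e : R => `|X0 i i + e * z i 0 ^+ 2| `^ (q - 1))); first exact: cst_continuous.
  exact: continuous_affine_normr_powR.
apply: (cvgr_to_ge (cvg_at_right_filter (H_cont 0))); near=> e.
have e0 : 0 < e by near: e; exact: nbhs_right_gt.
apply: (le_trans (bform_le_perturbed z e0)); rewrite /H ler_wpM2l ?divr_ge0 ?value_ge0 //.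
by apply: ler_sum => i _; rewrite ger0_norm // addr_ge0 // mulr_ge0 ?sqr_ge0 // ltW.
Unshelve. all: by end_near.
Qed.

Definition dual_u : R := V / r.
Definition dual_v : 'rV[R]_(m + n) := \row_i (V / 2 * X0 i i `^ (q - 1)).
Definition dual_t : 'rV[R]_(m + n) :=
  \row_i (dual_v 0 i `^ (r / (r - 2)) / dual_u `^ (2 / (r - 2))).

Lemma dual_certificate_feasible : dual_feasible A p dual_u dual_u dual_t dual_v.
Proof.
have V0 := value_ge0; have r20 : 0 < r - 2 by rewrite subr_gt0.
have u0 : 0 <= dual_u by rewrite divr_ge0 // ltW.
have vt i : dual_v 0 i `^ (r / (r - 2)) <= dual_t 0 i * dual_u `^ (2 / (r - 2)).
  have [V_eq0|V_neq0] := eqVneq V 0.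
    have e_ne0 : 2 / (r - 2) != 0 by rewrite gt_eqF // divr_gt0.
    have qs_ne0 : r / (r - 2) != 0 by rewrite gt_eqF // divr_gt0.
    by rewrite /dual_u mxE V_eq0 !mul0r (powR0 qs_ne0) (powR0 e_ne0) mulr0.
  have u_neq0 : dual_u != 0 by rewrite mulf_neq0 // invr_eq0 gt_eqF.
  by rewrite [dual_t 0 i]mxE divfK // powR_eq0 negb_and u_neq0.
split; first by move=> i _; apply: vt.
split; first by move=> i _; apply: vt.
do 3!split => //; first by move=> i; rewrite mxE divr_ge0 ?powR_ge0.
split; first by rewrite linearB /= tr_diag_mx bigA_sym.
move=> z; rewrite -/(bform _ z z) bformB bform_diag_mx subr_ge0.
apply: (le_trans (first_order_condition z)); apply: ler_sum => i _.
by rewrite mxE.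
Qed.

Lemma dual_certificate_obj_le : dual_obj p dual_u dual_u dual_t <= V.
Proof.
have V0 := value_ge0; have r20 : 0 < r - 2 by rewrite subr_gt0.
have qs_ne0 : r / (r - 2) != 0 by rewrite gt_eqF // divr_gt0.
rewrite /dual_obj theta_pE.
have [V_eq0|V_neq0] := eqVneq V 0.
  rewrite /dual_u V_eq0 mul0r big1 ?mulr0 ?addr0 // => i _.
  by rewrite !mxE V_eq0 !mul0r (powR0 qs_ne0) mul0r.
have Vp : 0 < V by rewrite lt_def V_neq0.
have [_ [sumI sumJ]] := X0_feasible; rewrite !X0_diag_sumE in sumI sumJ.
set c := (V / 2) `^ (r / (r - 2)) / dual_u `^ (2 / (r - 2)).
have tE i : dual_t 0 i = c * X0 i i `^ q.
  rewrite !mxE powRM ?powR_ge0 ?divr_ge0 // -powRrM /c mulrAC; congr (_ * _ `^ _).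
  by field; rewrite !gt_eqF.
have sum_le2 : \sum_i X0 i i `^ q <= 1 + 1 by rewrite sum_split_blocks lerD.
have th0 : 0 <= theta r * c by rewrite mulr_ge0 ?divr_ge0 ?powR_ge0 // ltW // theta_gt0.
rewrite (eq_bigr (fun i => c * X0 i i `^ q)) => [|i _]; last exact: tE.
rewrite -mulr_sumr mulrA.
have := ler_wpM2l th0 sum_le2.
have := theta_scale p2 Vp; rewrite -/dual_u -/c => ->.
have : dual_u + dual_u + (1 - 2 / r) * (V / 2) * 2 = V by rewrite /dual_u; field; rewrite gt_eqF.
lra.
Qed.

Lemma dual_attained : exists (u1 u2 : R) (t v : 'rV[R]_(m + n)),
  dual_feasible A p u1 u2 t v /\ dual_obj p u1 u2 t = V.
Proof.
exists dual_u, dual_u, dual_t, dual_v; split; first exact: dual_certificate_feasible.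
apply/eqP; rewrite eq_le dual_certificate_obj_le /=.
exact: (weak_duality p2 dual_certificate_feasible X0_feasible).
Qed.

End StrongDuality.

Theorem proposition3p3 (R : realType) (m n : nat) (A : 'M[R]_(m, n)) (p : rat)
  (hp : 2 < p) :
  0 < theta_p R p /\
  (* the primal maximum is attained and equals pv_norm *)
  (exists X : 'M[R]_(m + n), pv_feasible p X /\ frob (bigA A) X = pv_norm A p) /\
  (forall X : 'M[R]_(m + n), pv_feasible p X -> frob (bigA A) X <= pv_norm A p) /\
  (* the dual minimum is attained and equals pv_norm (strong duality) *)
  (exists (u1 u2 : R) (t v : 'rV[R]_(m + n)),
     dual_feasible A p u1 u2 t v /\ dual_obj p u1 u2 t = pv_norm A p) /\
  (forall (u1 u2 : R) (t v : 'rV[R]_(m + n)),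
     dual_feasible A p u1 u2 t v -> pv_norm A p <= dual_obj p u1 u2 t).
Proof.
have p2 : 2 < ratr p :> R by have := hp; rewrite -(ltr_rat R) rmorph_nat.
have [X0 X0_feasible X0_max] := pv_max_exists A p2.
have normE := pv_normE X0_feasible X0_max.
split; first exact: theta_gt0.
split; first by exists X0.
split; first by move=> X FX; rewrite normE; apply: X0_max.
split; first by rewrite normE; apply: dual_attained.
by move=> u1 u2 t v Dv; rewrite normE; exact: (weak_duality p2 Dv X0_feasible).
Qed.
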